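(* Let $d\geq 3$ and $s_1\leq s_2\leq\cdots\leq s_{d-1}$ be positive integers. Then $$\binom{s_1+s_2+\cdots+s_{d-1}}{s_1} < 2^{s_1-1}d$$ if and only if $s_1=s_2=\cdots=s_{d-1}=1$. *)

From mathcomp Require Import all_boot.

(* Put a := s_1 and N := s_1 + ... + s_{d-1}, so that N >= (d-1) a.  If a = 1
   the binomial coefficient is N, which is < d exactly when every s_i is 1.  If
   a >= 2, comparing consecutive binomial coefficients,
   C(n+1+k, n+1) = C(n+k, n) (n+1+k)/(n+1) >= 2 C(n+k, n) for k >= n+1, gives
   C(N, a) >= 2^(a-1) (N - a + 1) as soon as N >= 2a, and N - a + 1 >= d. *)

From mathcomp Require Import all_boot.
From mathcomp Require Import zify.

Lemma exp2_mul_leq_bin {n k} : n < k -> 2 ^ n * k.+1 <= 'C(n.+1 + k, n.+1).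
Proof.
elim: n => [|n IHn] lt_nk; first by rewrite expn0 mul1n bin1 add1n.
rewrite -(leq_pmul2l (ltn0Sn n.+1)) -mul_bin_diag.
apply: leq_trans (leq_mul (leqnn _) (IHn (ltnW lt_nk))).
rewrite expnS -!mulnA mulnA leq_mul2r; apply/orP; right; lia.
Qed.

Lemma exp2_mul_succ_leq_bin {m a N} :
  2 <= m -> 2 <= a -> m * a <= N -> 2 ^ a.-1 * m.+1 <= 'C(N, a).
Proof.
move=> m_ge2 a_ge2 maN.
have lt_a_Na : a.-1 < N - a by nia.
have := exp2_mul_leq_bin lt_a_Na.
rewrite prednK ?(leq_trans _ a_ge2) // subnKC; last by nia.
apply: leq_trans; rewrite leq_mul2l ltnS; apply/orP; right; nia.
Qed.

Lemma sum_pos_leq_card (I : finType) (s : I -> nat) :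
  (forall i, 0 < s i) -> \sum_i s i <= #|I| -> forall i, s i = 1.
Proof.
move=> s_pos sum_le i.
have sum_pred0 : \sum_j (s j).-1 = 0.
  apply/eqP; rewrite -leqn0 -(leq_add2r #|I|) add0n -{1}sum1_card -big_split.
  by rewrite (eq_bigr s) // => j _; exact: etrans (addn1 _) (prednK (s_pos j)).
move/eqP: sum_pred0; rewrite sum_nat_eq0 => /forall_inP/(_ i isT)/eqP.
by have := s_pos i; case: (s i) => [|[]].
Qed.

(* s_1 <= ... <= s_{d-1} is encoded as s : 'I_(d.-1) -> nat, with s i the
   (i+1)-th term; s ord0 is s_1 (d >= 3 ensures d.-1 >= 2). *)
Theorem lemmaA1 (d : nat) (hd : 3 <= d) (s : 'I_d.-1 -> nat)
  (hpos : forall i, 0 < s i)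
  (hmono : forall i j : 'I_d.-1, i <= j -> s i <= s j)
  (i0 : 'I_d.-1) (hi0 : nat_of_ord i0 = 0) :
  ('C(\sum_(i < d.-1) s i, s i0) < 2 ^ (s i0).-1 * d)
  <-> (forall i, s i = 1).
Proof.
have d_pos : 0 < d by apply: leq_trans hd.
split=> [bin_lt|s1]; last first.
  by rewrite s1 bin1 expn0 mul1n (eq_bigr (fun=> 1)) // sum1_card card_ord prednK.
have sum_ge : d.-1 * s i0 <= \sum_(i < d.-1) s i.
  rewrite -[d.-1 in X in X <= _]card_ord -sum_nat_const.
  by apply: leq_sum => i _; apply: hmono; rewrite hi0.
have [s_i0_ge2 | s_i0_le1] := leqP 2 (s i0).
  have d1_ge2 : 2 <= d.-1 by rewrite -ltnS prednK.
  have := exp2_mul_succ_leq_bin d1_ge2 s_i0_ge2 sum_ge.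
  by rewrite prednK // leqNgt bin_lt.
have s_i0 : s i0 = 1 by have := hpos i0; lia.
apply: sum_pos_leq_card => //; rewrite card_ord -ltnS prednK //.
by move: bin_lt; rewrite s_i0 bin1 expn0 mul1n.
Qed.
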